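(* Every monotone $\upsilon$-quasi-lattice is a $\mu$-quasi-lattice, and its $\upsilon$-quasi-supremum and $\mu$-quasi-supremum of every pair $\{x,y\}$ coincide.
   Context: A pre-ordered Banach space is a real Banach space $X$ with a cone $X_+$ ($X_++X_+\subseteq X_+$, $\lambda X_+\subseteq X_+$ for $\lambda\ge0$); $x\le y$ means $y-x\in X_+$. $X$ is monotone if $0\le x\le y$ implies $\|x\|\le\|y\|$. For $A\subseteq X$, $\upsilon(A)$ is the set of upper bounds and $\mu(A)$ the set of minimal upper bounds ($z\in\upsilon(A)$ such that $A\le w\le z$ implies $w=z$). Let $\sigma_{x,y}(z)=\|z-x\|+\|z-y\|$. A pre-ordered Banach space with closed cone is a $\upsilon$-quasi-lattice (resp. $\mu$-quasi-lattice) if for all $x,y$ the set $\upsilon(\{x,y\})$ (resp. $\mu(\{x,y\})$) is non-empty and contains a unique minimizer of $\sigma_{x,y}$ on that set, called the $\upsilon$-quasi-supremum (resp. $\mu$-quasi-supremum) of $\{x,y\}$. *)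

From HB Require Import structures.
From mathcomp Require Import all_boot all_order all_algebra.
From mathcomp Require Import all_classical all_reals all_analysis.
Set Implicit Arguments. Unset Strict Implicit. Unset Printing Implicit Defensive.
Import Order.TTheory GRing.Theory Num.Theory.
Import numFieldNormedType.Exports.
Local Open Scope classical_set_scope.
Local Open Scope ring_scope.

(* A real Banach space is [V : completeNormedModType R] with [R : realType].
   A pre-order is given by a cone [C : set V]. *)

Definition is_cone (R : realType) (V : completeNormedModType R) (C : set V) : Prop :=
  (forall x y, C x -> C y -> C (x + y)) /\
  (forall (l : R) x, 0 <= l -> C x -> C (l *: x)).

Definition cle (R : realType) (V : completeNormedModType R) (C : set V) (x y : V) : Prop :=
  C (y - x).

Definition monotone_space (R : realType) (V : completeNormedModType R) (C : set V) : Prop :=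
  forall x y : V, cle C 0 x -> cle C x y -> `|x| <= `|y|.

Definition upper_bounds (R : realType) (V : completeNormedModType R) (C : set V) (A : set V) : set V :=
  [set z | forall a, A a -> cle C a z].

Definition min_upper_bounds (R : realType) (V : completeNormedModType R) (C : set V) (A : set V) : set V :=
  [set z | upper_bounds C A z /\
           (forall w, upper_bounds C A w -> cle C w z -> w = z)].

Definition sigma_xy (R : realType) (V : completeNormedModType R) (x y z : V) : R :=
  `|z - x| + `|z - y|.

Definition is_sigma_min (R : realType) (V : completeNormedModType R) (S : set V) (x y z : V) : Prop :=
  S z /\ (forall w, S w -> sigma_xy x y z <= sigma_xy x y w).

Definition has_unique_sigma_min (R : realType) (V : completeNormedModType R) (S : set V) (x y : V) : Prop :=
  (exists z, S z) /\ (exists z, is_sigma_min S x y z /\ forall z', is_sigma_min S x y z' -> z' = z).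

Definition upsilon_quasi_lattice (R : realType) (V : completeNormedModType R) (C : set V) : Prop :=
  is_cone C /\ closed C /\
  forall x y : V, has_unique_sigma_min (upper_bounds C [set x; y]) x y.

Definition mu_quasi_lattice (R : realType) (V : completeNormedModType R) (C : set V) : Prop :=
  is_cone C /\ closed C /\
  forall x y : V, has_unique_sigma_min (min_upper_bounds C [set x; y]) x y.

(* The upsilon-quasi-supremum (resp. mu-quasi-supremum) of {x,y} is the
   unique minimizer; in a quasi-lattice, [is_sigma_min] characterizes it. *)
Definition upsilon_qsup (R : realType) (V : completeNormedModType R) (C : set V) (x y z : V) : Prop :=
  is_sigma_min (upper_bounds C [set x; y]) x y z.

Definition mu_qsup (R : realType) (V : completeNormedModType R) (C : set V) (x y z : V) : Prop :=
  is_sigma_min (min_upper_bounds C [set x; y]) x y z.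

From HB Require Import structures.
From mathcomp Require Import all_boot all_order all_algebra.
From mathcomp Require Import all_classical all_reals all_analysis.
Set Implicit Arguments. Unset Strict Implicit.
Import Order.TTheory GRing.Theory Num.Theory.
Local Open Scope classical_set_scope.
Local Open Scope ring_scope.

(* In a monotone space, moving an upper bound [z] of {x, y} down to a smaller
   upper bound [w] decreases both [|z - x|] and [|z - y|], hence [sigma_{x,y}].
   So if the minimizer of [sigma_{x,y}] over all upper bounds were not a minimal
   upper bound, a strictly smaller upper bound would be a second minimizer,
   contradicting uniqueness.  Since minimal upper bounds are upper bounds, the
   same point then minimizes [sigma_{x,y}] over them, uniquely. *)

Section SigmaMin.
Variables (R : realType) (V : completeNormedModType R).

Lemma is_sigma_min_sub (S T : set V) (x y z : V) :
  S `<=` T -> S z -> is_sigma_min T x y z -> is_sigma_min S x y z.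
Proof. by move=> ST Sz [_ zmin]; split=> // w /ST; exact: zmin. Qed.

Lemma is_sigma_min_sup (S T : set V) (x y z0 z : V) :
  S `<=` T -> S z0 -> is_sigma_min T x y z0 -> is_sigma_min S x y z ->
  is_sigma_min T x y z.
Proof.
move=> ST Sz0 [_ z0min] [Sz zmin]; split; first exact: ST.
by move=> w Tw; apply: le_trans (zmin _ Sz0) (z0min _ Tw).
Qed.

End SigmaMin.

Section MonotoneSpace.
Variables (R : realType) (V : completeNormedModType R) (C : set V).

Lemma min_upper_bounds_sub (A : set V) : min_upper_bounds C A `<=` upper_bounds C A.
Proof. by move=> z []. Qed.

Hypothesis monoC : monotone_space C.

Lemma monotone_norm_subr (x w z : V) :
  cle C x w -> cle C w z -> `|w - x| <= `|z - x|.
Proof.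
move=> xw wz; apply: monoC; first by rewrite /cle subr0.
by rewrite /cle opprB addrA subrK.
Qed.

Lemma sigma_xy_le_upper_bound (x y w z : V) :
  upper_bounds C [set x; y] w -> cle C w z -> sigma_xy x y w <= sigma_xy x y z.
Proof.
move=> ubw wz; rewrite /sigma_xy.
by rewrite lerD // (monotone_norm_subr _ wz) //; apply: ubw; [left|right].
Qed.

Lemma unique_sigma_min_min_upper_bound (x y z0 : V) :
  is_sigma_min (upper_bounds C [set x; y]) x y z0 ->
  (forall z, is_sigma_min (upper_bounds C [set x; y]) x y z -> z = z0) ->
  min_upper_bounds C [set x; y] z0.
Proof.
move=> [ubz0 z0min] z0uniq; split=> // w ubw wz0.
apply: z0uniq; split=> // v ubv.
exact: le_trans (sigma_xy_le_upper_bound ubw wz0) (z0min _ ubv).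
Qed.

End MonotoneSpace.

Theorem theorem5p12 (R : realType) (V : completeNormedModType R) (C : set V) :
  upsilon_quasi_lattice C -> monotone_space C ->
  mu_quasi_lattice C /\
  (forall x y z : V, upsilon_qsup C x y z <-> mu_qsup C x y z).
Proof.
move=> [coneC [closedC qlatC]] monoC.
have qsupE x y : exists z0, min_upper_bounds C [set x; y] z0 /\
    forall z, (upsilon_qsup C x y z <-> z = z0) /\ (mu_qsup C x y z <-> z = z0).
  have [_ [z0 [z0min z0uniq]]] := qlatC x y.
  have muz0 := unique_sigma_min_min_upper_bound monoC z0min z0uniq.
  have sub := @min_upper_bounds_sub _ _ C [set x; y].
  exists z0; split=> // z; split; split=> [|->].
  - exact: z0uniq.
  - exact: z0min.
  - by move=> zmin; apply/z0uniq/(is_sigma_min_sup sub muz0 z0min).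
  - exact: is_sigma_min_sub sub muz0 z0min.
split=> [|x y z]; last first.
  by have [z0 [_ qsupz0]] := qsupE x y; rewrite (proj1 (qsupz0 z)) (proj2 (qsupz0 z)).
do 2!split=> //; move=> x y; have [z0 [muz0 qsupz0]] := qsupE x y.
split; first by exists z0.
by exists z0; split=> [|z]; [apply/(proj2 (qsupz0 z0)) | move/(proj2 (qsupz0 z))].
Qed.
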